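(* Let $r,s\ge2$ be fixed integers, and consider the equation in $x\in(-1,\infty)$ \[ (rs-r-s)\Big(1+\frac{x}{r-1}\Big)^{s-2}=(1+x)\Big(rs-r-s+sx+\frac{x(x+1)}{r-1}\Big).\tag{$\ast$} \] Then $x=0$ is a solution of $(\ast)$. Moreover: (a) If $s\in\{2,3,4\}$ and $(r,s)\ne(2,2)$, then $x=0$ is the unique solution of $(\ast)$ on $(-1,\infty)$. (b) If $s\ge5$ and $r\ge s-1$, then $(\ast)$ has no solutions on $(-1,0)$ and at most one solution on $(0,\infty)$. *)

From Stdlib Require Import Reals Lra Lia.
Open Scope R_scope.

Definition eqLHS (r s : nat) (x : R) : R :=
  (INR r * INR s - INR r - INR s) * (1 + x / (INR r - 1)) ^ (s - 2).

Definition eqRHS (r s : nat) (x : R) : R :=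
  (1 + x) * (INR r * INR s - INR r - INR s + INR s * x
             + x * (x + 1) / (INR r - 1)).

Definition is_sol (r s : nat) (x : R) : Prop := eqLHS r s x = eqRHS r s x.

From Stdlib Require Import Reals Lra Lia Psatz.
From Coquelicot Require Import Coquelicot.
Open Scope R_scope.

(* Proof idea.  Write a = r - 1, c = rs - r - s, n = s - 2 and
   q(x) = c + s x + x(x+1)/a, so that (star) reads c (1 + x/a)^n = (1+x) q(x).

   (a) For s = 2, 3, 4 the exponent n is at most 2, so (star) is polynomial:
       its right side minus its left side factors as x * B(x) with B > 0 on
       (-1, oo) (this is where (r,s) <> (2,2) is needed), whence x = 0.

   (b) On (-1, oo) we have 1 + x/a > 0, and (star) says that the function
       F(x) = (1+x) q(x) / (1 + x/a)^n takes the value c = F(0).  Its derivative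
       is N(x) / (a (1 + x/a)^(n+1)) for an explicit cubic N.  For s >= 5 and
       r >= s - 1 we show that N > 0 on (-1, 0] and that, on (0, oo), N stays
       negative once it is nonpositive (a cross-multiplication identity).  By
       the mean value theorem F is strictly increasing on (-1, 0], and two positive
       solutions x < y would give zeros z1 < z2 of N in (0, x) and (x, y). *)

(* The quadratic factor q, the function F and its derivative numerator N. *)
Definition quad (a c sg x : R) : R := c + sg * x + x * (x + 1) / a.

Definition ratio (a c sg : R) (n : nat) (x : R) : R :=
  (1 + x) * quad a c sg x / (1 + x / a) ^ n.

Definition numer (a c sg : R) (n : nat) (x : R) : R :=
  (a + x) * quad a c sg x + (1 + x) * (a + x) * (sg + (2 * x + 1) / a)
  - INR n * (1 + x) * quad a c sg x.

Lemma base_pos (a x : R) : 1 <= a -> -1 < x -> 0 < 1 + x / a.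
Proof.
  intros Ha Hx.
  replace (1 + x / a) with ((a + x) / a) by (field; lra).
  apply Rdiv_lt_0_compat; lra.
Qed.

(* The derivative of F (quotient rule, the common factor 1/a pulled out). *)
Lemma ratio_derive (a c sg : R) (n : nat) (x : R) :
  1 <= a -> -1 < x -> (1 <= n)%nat ->
  is_derive (ratio a c sg n) x (numer a c sg n x / (a * (1 + x / a) ^ S n)).
Proof.
  intros Ha Hx Hn.
  pose proof (base_pos a x Ha Hx) as Hu.
  assert (Hp : 0 < (1 + x / a) ^ n) by (apply pow_lt; lra).
  unfold ratio, quad; auto_derive.
  - apply pow_nonzero; lra.
  - destruct n as [|m]; [lia|].
    simpl pred; rewrite <- !tech_pow_Rmult.
    unfold numer, quad; rewrite S_INR.
    assert (0 < (1 + x / a) ^ m) by (apply pow_lt; lra).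
    assert (0 < (1 + x / a) ^ m) by (apply pow_lt; lra).
    unfold Rdiv in *; set (p := (1 + x * / a) ^ m) in *.
    field; repeat split; nra.
Qed.

Lemma ratio_mvt (a c sg : R) (n : nat) (x y : R) :
  1 <= a -> -1 < x -> x < y -> (1 <= n)%nat ->
  exists z, x < z < y /\
    ratio a c sg n y - ratio a c sg n x
      = numer a c sg n z / (a * (1 + z / a) ^ S n) * (y - x).
Proof.
  intros Ha Hx Hxy Hn.
  destruct (MVT_cor2 (ratio a c sg n)
             (fun z => numer a c sg n z / (a * (1 + z / a) ^ S n)) x y Hxy)
    as [z [Hdiff Hz]].
  - intros z Hz. apply is_derive_Reals, ratio_derive; auto; lra.
  - exists z; split; auto.
Qed.

Lemma derive_den_pos (a z : R) (n : nat) :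
  1 <= a -> -1 < z -> 0 < a * (1 + z / a) ^ n.
Proof.
  intros Ha Hz.
  apply Rmult_lt_0_compat; [lra|].
  apply pow_lt, base_pos; assumption.
Qed.

Lemma ratio_rolle (a c sg : R) (n : nat) (x y : R) :
  1 <= a -> -1 < x < y -> (1 <= n)%nat -> ratio a c sg n x = ratio a c sg n y ->
  exists z, x < z < y /\ numer a c sg n z = 0.
Proof.
  intros Ha Hxy Hn Heq.
  destruct (ratio_mvt a c sg n x y Ha ltac:(lra) ltac:(lra) Hn) as [z [Hz E]].
  exists z; split; auto.
  pose proof (derive_den_pos a z (S n) Ha ltac:(lra)) as Hden.
  rewrite Heq, Rminus_eq_0 in E.
  symmetry in E; apply Rmult_integral in E.
  destruct E as [E|E]; [|lra].
  unfold Rdiv in E; apply Rmult_integral in E.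
  destruct E as [E|E]; auto.
  exfalso; exact (Rinv_neq_0_compat _ (Rgt_not_eq _ _ Hden) E).
Qed.

(* Part (b): the parameters of (star) with s = n + 2 >= 5 and r = a + 1 >= s - 1. *)
Section LargeExponent.

Variables (a c sg : R) (n : nat).
Hypothesis Hn3 : (3 <= n)%nat.
Hypothesis Hna : INR n <= a.
Hypothesis Hsg : sg = INR n + 2.
Hypothesis Hc : c = a * sg - a - 1.

Let n_ge3_real : 3 <= INR n.
Proof. replace 3 with (INR 3) by (simpl; ring). apply le_INR; exact Hn3. Qed.

Let n_ge1 : (1 <= n)%nat.
Proof. lia. Qed.

Lemma quad_pos (x : R) : -1 < x -> 0 < quad a c sg x.
Proof.
  intros Hx. unfold quad.
  replace (c + sg * x + x * (x + 1) / a)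
    with ((c - sg) + (x + 1) * (sg + x / a)) by (field; lra).
  pose proof (base_pos a x ltac:(lra) Hx).
  rewrite Hc, Hsg. nra.
Qed.

(* N > 0 on (-1, 0]: N = q ((a - n) + (3 - s) x) + (1+x)(a+x) q' with q' > 0. *)
Lemma numer_pos_nonpos (x : R) : -1 < x <= 0 -> 0 < numer a c sg n x.
Proof.
  intros Hx.
  pose proof (quad_pos x ltac:(lra)) as Hq.
  assert (Hdq : 0 < sg + (2 * x + 1) / a).
  { pose proof (base_pos a (2 * x + 1) ltac:(lra) ltac:(lra)). lra. }
  unfold numer.
  replace ((a + x) * quad a c sg x + (1 + x) * (a + x) * (sg + (2 * x + 1) / a)
           - INR n * (1 + x) * quad a c sg x)
    with (quad a c sg x * ((a - INR n) + x * (1 - INR n))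
          + ((1 + x) * (a + x)) * (sg + (2 * x + 1) / a)) by ring.
  apply Rplus_le_lt_0_compat.
  - apply Rmult_le_pos; nra.
  - apply Rmult_lt_0_compat; nra.
Qed.

Let K0 : R := c * (a - INR n) + (a * sg + 1).
Let K2 : R := ((a * sg + 1) * (2 - INR n) + 3 * a + 2 - INR n) / a.
Let K3 : R := (3 - INR n) / a.

Lemma numer_cross (z w : R) :
  z * numer a c sg n w
    = w * numer a c sg n z + (w - z) * (- K0 + K2 * z * w + K3 * z * w * (w + z)).
Proof. unfold numer, quad, K0, K2, K3. rewrite Hc, Hsg. field. lra. Qed.

(* Since K0 > 0 and K2, K3 <= 0, once N is nonpositive at z > 0 it is
   negative at every w > z. *)
Lemma numer_stays_neg (z w : R) :
  0 < z < w -> numer a c sg n z <= 0 -> numer a c sg n w < 0.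
Proof.
  intros Hzw HN.
  assert (HK0 : 0 < K0).
  { assert (0 < c) by (rewrite Hc, Hsg; nra).
    assert (0 <= c * (a - INR n)) by (apply Rmult_le_pos; lra).
    unfold K0. nra. }
  assert (HK2 : K2 < 0).
  { assert (0 <= (a * sg + 1) * (INR n - 3)) by (apply Rmult_le_pos; nra).
    unfold K2. apply Rdiv_neg_pos; [|lra]. rewrite Hsg in *. nra. }
  assert (HK3 : K3 <= 0).
  { unfold K3, Rdiv.
    assert (0 < / a) by (apply Rinv_0_lt_compat; lra). nra. }
  assert (Hzw0 : 0 < z * w) by nra.
  assert (- K0 + K2 * z * w + K3 * z * w * (w + z) < 0).
  { assert (0 < z * w * (w + z)) by (apply Rmult_lt_0_compat; lra). nra. }
  pose proof (numer_cross z w). nra.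
Qed.

Lemma ratio_at_0 : ratio a c sg n 0 = c.
Proof.
  unfold ratio, quad. replace (1 + 0 / a) with 1 by (field; lra).
  rewrite pow1. field; lra.
Qed.

(* F is strictly increasing on (-1, 0], so it does not take the value c there. *)
Lemma ratio_level_neg (x : R) : -1 < x < 0 -> ratio a c sg n x <> c.
Proof.
  intros Hx Hlevel.
  destruct (ratio_mvt a c sg n x 0 ltac:(lra) ltac:(lra) ltac:(lra) n_ge1)
    as [z [Hz E]].
  rewrite ratio_at_0, Hlevel, Rminus_eq_0 in E.
  pose proof (numer_pos_nonpos z ltac:(lra)).
  pose proof (derive_den_pos a z (S n) ltac:(lra) ltac:(lra)).
  assert (0 < numer a c sg n z / (a * (1 + z / a) ^ S n) * (0 - x)).
  { apply Rmult_lt_0_compat; [apply Rdiv_lt_0_compat|]; lra. }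
  lra.
Qed.

(* F takes the value c at most once on (0, oo): with F(0) = F(x) = F(y) = c and
   0 < x < y, Rolle gives zeros z1 < z2 of N, contradicting numer_stays_neg. *)
Lemma ratio_level_pos_unique (x y : R) :
  0 < x -> 0 < y -> ratio a c sg n x = c -> ratio a c sg n y = c -> x = y.
Proof.
  assert (Hordered : forall u v, 0 < u < v ->
            ratio a c sg n u = c -> ratio a c sg n v = c -> False).
  { intros u v Huv Hu Hv.
    destruct (ratio_rolle a c sg n 0 u ltac:(lra) ltac:(lra) n_ge1
                ltac:(rewrite ratio_at_0; auto)) as [z1 [Hz1 E1]].
    destruct (ratio_rolle a c sg n u v ltac:(lra) ltac:(lra) n_ge1
                ltac:(congruence)) as [z2 [Hz2 E2]].
    pose proof (numer_stays_neg z1 z2 ltac:(lra) ltac:(lra)). lra. }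
  intros Hx Hy Hxl Hyl.
  destruct (Rtotal_order x y) as [Hlt|[Heq|Hgt]]; auto; exfalso.
  - exact (Hordered x y ltac:(lra) Hxl Hyl).
  - exact (Hordered y x ltac:(lra) Hyl Hxl).
Qed.

End LargeExponent.

Lemma sol_ratio_level (r s : nat) (x : R) :
  (2 <= r)%nat -> -1 < x -> is_sol r s x ->
  ratio (INR r - 1) (INR r * INR s - INR r - INR s) (INR s) (s - 2) x
    = INR r * INR s - INR r - INR s.
Proof.
  intros Hr Hx Hsol.
  assert (Ha : 1 <= INR r - 1).
  { apply le_INR in Hr. simpl in Hr. lra. }
  pose proof (base_pos _ x Ha Hx) as Hu.
  assert (0 < (1 + x / (INR r - 1)) ^ (s - 2)) by (apply pow_lt; lra).
  unfold is_sol, eqLHS, eqRHS in Hsol.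
  unfold ratio, quad. rewrite <- Hsol. field. lra.
Qed.

Lemma factor_root (x B : R) : x * B = 0 -> 0 < B -> x = 0.
Proof.
  intros E HB. apply Rmult_integral in E. destruct E; lra.
Qed.

Lemma sol_s2 (r : nat) (x : R) : 3 <= INR r -> -1 < x -> is_sol r 2 x -> x = 0.
Proof.
  intros Hr Hx Hsol.
  set (B := (INR r - 2) + (1 + x) * (2 + (x + 1) / (INR r - 1))).
  assert (E : eqRHS r 2 x - eqLHS r 2 x = x * B).
  { unfold eqRHS, eqLHS, B. simpl (2 - 2)%nat.
    replace (INR 2) with 2 by (simpl; ring). field. lra. }
  apply (factor_root x B); [unfold is_sol in Hsol; lra|].
  assert (0 < (x + 1) / (INR r - 1)) by (apply Rdiv_lt_0_compat; lra).
  unfold B. nra.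
Qed.

Lemma sol_s3 (r : nat) (x : R) : 2 <= INR r -> -1 < x -> is_sol r 3 x -> x = 0.
Proof.
  intros Hr Hx Hsol.
  set (c := 2 * INR r - 3).
  set (B := c * (INR r - 2) / (INR r - 1) + 3 * (1 + x) + (1 + x) ^ 2 / (INR r - 1)).
  assert (E : eqRHS r 3 x - eqLHS r 3 x = x * B).
  { unfold eqRHS, eqLHS, B, c. simpl (3 - 2)%nat.
    replace (INR 3) with 3 by (simpl; ring). field. lra. }
  apply (factor_root x B); [unfold is_sol in Hsol; lra|].
  assert (0 <= c * (INR r - 2) / (INR r - 1))
    by (apply Rdiv_le_0_compat; unfold c; nra).
  assert (0 <= (1 + x) ^ 2 / (INR r - 1)) by (apply Rdiv_le_0_compat; nra).
  unfold B. lra.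
Qed.

Lemma sol_s4 (r : nat) (x : R) : 2 <= INR r -> -1 < x -> is_sol r 4 x -> x = 0.
Proof.
  intros Hr Hx Hsol.
  set (a := INR r - 1).
  set (c := 3 * a - 1).
  set (B := (a * (1 + x) ^ 2 + (1 + x) * (4 * a ^ 2 - c) + c * (a - 1) ^ 2) / a ^ 2).
  assert (E : eqRHS r 4 x - eqLHS r 4 x = x * B).
  { unfold eqRHS, eqLHS, B, c, a. simpl (4 - 2)%nat.
    replace (INR 4) with 4 by (simpl; ring). field. lra. }
  apply (factor_root x B); [unfold is_sol in Hsol; lra|].
  assert (0 < a * (1 + x) ^ 2) by (unfold a; apply Rmult_lt_0_compat; nra).
  assert (0 <= (1 + x) * (4 * a ^ 2 - c)) by (unfold c, a; apply Rmult_le_pos; nra).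
  assert (0 <= c * (a - 1) ^ 2) by (unfold c, a; apply Rmult_le_pos; nra).
  unfold B. apply Rdiv_lt_0_compat; [lra | unfold a; nra].
Qed.

Lemma sol_zero (r s : nat) : 2 <= INR r -> is_sol r s 0.
Proof.
  intros Hr. unfold is_sol, eqLHS, eqRHS.
  replace (1 + 0 / (INR r - 1)) with 1 by (field; lra).
  rewrite pow1. field. lra.
Qed.

Theorem lemmaA2 (r s : nat) (hr : (2 <= r)%nat) (hs : (2 <= s)%nat) :
  is_sol r s 0 /\
  ((s = 2%nat \/ s = 3%nat \/ s = 4%nat) -> ~ (r = 2%nat /\ s = 2%nat) ->
     forall x : R, -1 < x -> is_sol r s x -> x = 0) /\
  ((5 <= s)%nat -> (s - 1 <= r)%nat ->
     (forall x : R, -1 < x < 0 -> ~ is_sol r s x) /\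
     (forall x y : R, 0 < x -> 0 < y -> is_sol r s x -> is_sol r s y -> x = y)).
Proof.
  assert (Hr : 2 <= INR r) by (apply le_INR in hr; simpl in hr; lra).
  split; [exact (sol_zero r s Hr)|]. split.
  - intros Hs Hne x Hx Hsol.
    destruct Hs as [-> | [-> | ->]].
    + assert (Hr3 : (3 <= r)%nat) by (destruct (Nat.eq_dec r 2); [tauto | lia]).
      apply le_INR in Hr3; simpl in Hr3.
      exact (sol_s2 r x ltac:(lra) Hx Hsol).
    + exact (sol_s3 r x Hr Hx Hsol).
    + exact (sol_s4 r x Hr Hx Hsol).
  - intros Hs5 Hsr.
    set (a := INR r - 1); set (c := INR r * INR s - INR r - INR s).
    assert (Hn3 : (3 <= s - 2)%nat) by lia.
    assert (Hsg : INR s = INR (s - 2) + 2)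
      by (rewrite minus_INR by lia; simpl; ring).
    assert (Hc : c = a * INR s - a - 1) by (unfold c, a; ring).
    assert (Hna : INR (s - 2) <= a).
    { unfold a. replace (INR r - 1) with (INR (r - 1))
        by (rewrite minus_INR by lia; simpl; ring).
      apply le_INR. lia. }
    split.
    + intros x Hx Hsol.
      exact (ratio_level_neg a c (INR s) (s - 2) Hn3 Hna Hsg Hc x Hx
               (sol_ratio_level r s x hr ltac:(lra) Hsol)).
    + intros x y Hx Hy Hsolx Hsoly.
      exact (ratio_level_pos_unique a c (INR s) (s - 2) Hn3 Hna Hsg Hc x y Hx Hy
               (sol_ratio_level r s x hr ltac:(lra) Hsolx)
               (sol_ratio_level r s y hr ltac:(lra) Hsoly)).
Qed.
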